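(* Let $q=5$, $m\geq 2$ and $n=\frac{q^m-1}{2}$. Then the negacyclic BCH code $\mathcal{C}_{(q,n,4,0)}$, whose generator polynomial is $\mathbb{M}_{\beta}(x)\mathbb{M}_{\beta^3}(x)$, has parameters $[n,n-2m,4]$ and is distance-optimal with respect to the sphere-packing bound.
   Context: Let $\ell$ be the order of $q$ modulo $2n$, $\alpha$ a primitive element of $\mathrm{GF}(q^\ell)$, $\beta=\alpha^{(q^\ell-1)/(2n)}$ (a primitive $2n$-th root of unity), and $\mathbb{M}_{\beta^j}(x)$ the minimal polynomial of $\beta^j$ over $\mathrm{GF}(q)$. $\mathcal{C}_{(q,n,4,0)}$ is the negacyclic code of length $n$ over $\mathrm{GF}(q)$, i.e. the ideal of $\mathrm{GF}(q)[x]/(x^n+1)$ generated by $\mathrm{lcm}(\mathbb{M}_{\beta}(x),\mathbb{M}_{\beta^3}(x),\mathbb{M}_{\beta^5}(x))$. An $[n,k,d]$ code over $\mathrm{GF}(q)$ is distance-optimal with respect to the sphere-packing bound if the sphere-packing bound shows that no $[n,k,d+1]$ linear code over $\mathrm{GF}(q)$ exists. *)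

From HB Require Import structures.
From mathcomp Require Import all_boot all_order all_algebra all_field.
Set Implicit Arguments. Unset Strict Implicit. Unset Printing Implicit Defensive.
Import GRing.Theory.
Local Open Scope ring_scope.

(* Embedding of GF(5) = 'F_5 into a field F (a ring morphism when char F = 5). *)
Definition toF (F : fieldType) (a : 'F_5) : F := (val a)%:R.

Definition ord_mod (q N l : nat) : Prop :=
  (0 < l)%N /\ (q ^ l %% N = 1 %% N)%N /\
  forall k, (0 < k < l)%N -> (q ^ k %% N != 1 %% N)%N.

Definition is_minpoly5 (F : fieldType) (b : F) (p : {poly 'F_5}) : Prop :=
  p \is monic /\ root (map_poly (@toF F) p) b /\
  forall r : {poly 'F_5}, r != 0 -> root (map_poly (@toF F) r) b ->
    (size p <= size r)%N.

Definition is_lcm3 (a b c g : {poly 'F_5}) : Prop :=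
  g \is monic /\ a %| g /\ b %| g /\ c %| g /\
  forall h : {poly 'F_5}, a %| h -> b %| h -> c %| h -> g %| h.

Definition wpoly (n : nat) (c : 'rV['F_5]_n) : {poly 'F_5} := \sum_(i < n) c 0 i *: 'X^i.

(* The negacyclic code of length n generated by g: the ideal (g) of
   R = GF(5)[x]/(x^n+1), elements of R being represented by their reduced
   representatives of degree < n, i.e. by words of length n. *)
Definition negacyclic_code (n : nat) (g : {poly 'F_5}) : {set 'rV['F_5]_n} :=
  [set c : 'rV['F_5]_n |
     [exists a : 'rV['F_5]_n, wpoly c == (wpoly a * g) %% ('X^n + 1)]].

Local Close Scope ring_scope.
Definition wt (n : nat) (c : 'rV['F_5]_n) : nat := #|[set i | c ord0 i != 0%R]|.

(* C has minimum distance d (linear code: minimum nonzero weight). *)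
Definition min_dist (n : nat) (C : {set 'rV['F_5]_n}) (d : nat) : Prop :=
  (exists2 c, c \in C & (c != 0%R) && (wt c == d)) /\
  forall c, c \in C -> c != 0%R -> (d <= wt c)%N.

Definition code_dim (n : nat) (C : {set 'rV['F_5]_n}) : nat := \dim <<enum C>>%VS.

Definition sp_excludes (q n k d : nat) : Prop :=
  (q ^ n < q ^ k * \sum_(0 <= i < ((d - 1) %/ 2).+1) 'C(n, i) * (q - 1) ^ i)%N.

Definition sp_distance_optimal (q n k d : nat) : Prop := sp_excludes q n k d.+1.

(* Here beta is a primitive (5^m - 1)-th root of unity in GF(5^m), so beta^n = -1
   and g divides x^n + 1. Since beta^5 is a Frobenius conjugate of beta, M5 = M1, and
   the 5-cyclotomic cosets of 1 and 3 are disjoint of size m, so g = M1 M3 has degree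
   2m. For a codeword c put w_i = c_i beta^i and z_i = beta^(2i), distinct for i < n:
   the zeros beta, beta^3, beta^5 of c say that sum_i w_i z_i^k = 0 for k < 3, which
   no nonzero w supported on at most three nodes satisfies. Writing
   (beta -+ 1)^2 = +-beta^j gives a word 1 + x^2 + 2(+-x^j) + 2(+-x^j') of weight at
   most 4 in the code. Finally 5^(2m) = (2n + 1)^2 < 1 + 4n + 16 C(n, 2). *)

From HB Require Import structures.
From mathcomp Require Import all_boot all_order all_algebra all_field.
From mathcomp Require Import ring zify.
Set Implicit Arguments. Unset Strict Implicit. Unset Printing Implicit Defensive.
Import GRing.Theory.
Local Open Scope ring_scope.

Lemma wpoly_rVpoly n (c : 'rV['F_5]_n) : wpoly c = rVpoly c.
Proof.
rewrite /wpoly [in RHS](row_sum_delta c) linear_sum; apply: eq_bigr => i _.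
by rewrite linearZ /= -rVpoly_delta.
Qed.

Lemma dvdp_lcm3 (a b c g p : {poly 'F_5}) :
  is_lcm3 a b c g -> (g %| p) = [&& a %| p, b %| p & c %| p].
Proof.
case=> _ [ag [bg [cg lcm_g]]]; apply/idP/and3P => [g_p|[]]; last exact: lcm_g.
by split; apply: dvdp_trans g_p.
Qed.

Section NegacyclicCode.
Variables (n : nat) (g : {poly 'F_5}).
Hypotheses (n_gt0 : (0 < n)%N) (g_dvd : g %| 'X^n + 1).

Let size_Xn1 : size ('X^n + 1 : {poly 'F_5}) = n.+1.
Proof. by rewrite -[1]/(1%:P) size_XnaddC. Qed.

Lemma mem_negacyclic_code c : (c \in negacyclic_code n g) = (g %| rVpoly c).
Proof.
rewrite inE wpoly_rVpoly; apply/existsP/idP => [[a /eqP ->]|/dvdpP[h ch]].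
  by rewrite -dvdp_mod // dvdp_mull.
have size_mod : (size (h %% ('X^n + 1))%R <= n)%N.
  by rewrite -ltnS -size_Xn1 ltn_modp -size_poly_eq0 size_Xn1.
exists (poly_rV (h %% ('X^n + 1))).
rewrite wpoly_rVpoly poly_rV_K // [_ * g]mulrC modp_mul mulrC -ch modp_small //.
by rewrite size_Xn1 ltnS size_poly.
Qed.

Hypothesis g_neq0 : g != 0.

Let d := (size g).-1.

Let d_le_n : (d <= n)%N.
Proof.
by rewrite /d -ltnS prednK ?size_poly_gt0 // -size_Xn1 dvdp_leq // -size_poly_eq0 size_Xn1.
Qed.

Let encode : 'Hom('rV['F_5]_(n - d), 'rV['F_5]_n) :=
  linfun (poly_rV \o (g \o* rVpoly)).

Let encodeE a : encode a = poly_rV (rVpoly a * g).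
Proof. by rewrite lfunE. Qed.

Let size_encode (a : 'rV_(n - d)) : (size (rVpoly a * g)%R <= n)%N.
Proof.
have size_a : (size (rVpoly a) <= n - d)%N by apply: size_poly.
have := size_polyMleq (rVpoly a) g; have := size_poly_gt0 g; have := d_le_n.
by rewrite g_neq0 /d in size_a *; lia.
Qed.

Let encode_inj : injective encode.
Proof.
move=> a b; rewrite !encodeE => /(congr1 rVpoly).
rewrite !poly_rV_K ?size_encode // => /(mulIf g_neq0).
exact: (can_inj (@rVpolyK _ _)).
Qed.

Let limg_encode : limg encode = <<enum (negacyclic_code n g)>>%VS.
Proof.
apply/eqP; rewrite eqEsubv; apply/andP; split.
  apply/subvP => _ /memv_imgP [a _ ->]; apply: memv_span.
  by rewrite mem_enum mem_negacyclic_code encodeE poly_rV_K ?size_encode ?dvdp_mull.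
apply/span_subvP => c; rewrite mem_enum mem_negacyclic_code => g_dvd_c.
apply/memv_imgP; exists (poly_rV (rVpoly c %/ g)); first exact: memvf.
rewrite encodeE poly_rV_K ?divpK ?rVpolyK // size_divp // leq_sub2r //.
exact: size_poly.
Qed.

Lemma dim_negacyclic_code : code_dim (negacyclic_code n g) = (n - (size g).-1)%N.
Proof.
rewrite /code_dim -limg_encode limg_dim_eq ?dimvf /dim /= ?mul1n //.
by move/lker0P: encode_inj => /eqP ->; rewrite capv0.
Qed.

End NegacyclicCode.

(* Evaluating the annihilator of the other nodes isolates the term of [i]. *)
Lemma vanishing_moments_eq0 (F : fieldType) (I : finType) (w z : I -> F) d :
  {in [set i | w i != 0] &, injective z} ->
  (forall k, (k < d)%N -> \sum_i w i * z i ^+ k = 0) ->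
  (#|[set i | w i != 0%R]| <= d)%N -> forall i, w i = 0.
Proof.
set S := [set i | w i != 0]; move=> z_inj moments card_S i; apply/eqP/negPn/negP => w_i.
have S_i : i \in S by rewrite inE.
pose P := \prod_(x <- [seq z j | j <- enum (S :\ i)]) ('X - x%:P).
have size_P : (size P <= d)%N.
  by move: card_S; rewrite (cardsD1 i) S_i size_prod_XsubC size_map -cardE.
have : \sum_j w j * P.[z j] = 0.
  transitivity (\sum_(k < d) P`_k * \sum_j w j * z j ^+ k).
    under [RHS]eq_bigr => k _ do rewrite mulr_sumr.
    rewrite exchange_big; apply: eq_bigr => j _ /=.
    rewrite (horner_coef_wide _ size_P) mulr_sumr; apply: eq_bigr => k _.
    by rewrite mulrCA.
  by rewrite big1 // => k /= _; rewrite moments ?mulr0.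
rewrite (bigD1 i) //= big1 ?addr0 => [/eqP|j j_neq_i].
  rewrite mulf_eq0 (negPf w_i) -[_ == 0]/(root P (z i)) root_prod_XsubC => /mapP [j].
  rewrite mem_enum in_setD1 => /andP [j_neq_i S_j] /(z_inj _ _ S_i S_j) /eqP.
  by rewrite eq_sym (negPf j_neq_i).
have [->|w_j] := eqVneq (w j) 0; first by rewrite mul0r.
suff /eqP -> : root P (z j) by rewrite mulr0.
by rewrite root_prod_XsubC map_f // mem_enum in_setD1 j_neq_i inE.
Qed.

Lemma mul2n_half_pow_pred q m : odd q -> (2 * ((q ^ m - 1) %/ 2))%N = (q ^ m - 1)%N.
Proof.
move=> q_odd; rewrite mulnC divnK // dvdn2 oddB ?expn_gt0 ?oddX ?q_odd ?orbT //.
by case: q q_odd.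
Qed.

Lemma ord_mod_pow_pred q m l : (1 < q)%N -> (0 < m)%N -> ord_mod q (q ^ m - 1) l -> l = m.
Proof.
move=> q_gt1 m_gt0 [l_gt0 [ql_mod minl]].
have qm_split : (q ^ m = (q ^ m - 1) + 1)%N by rewrite subnK ?expn_gt0 ?(ltnW q_gt1).
have [l_lt_m|m_lt_l|//] := ltngtP l m.
- have qlq : (q ^ l * q <= q ^ m)%N by rewrite -expnSr leq_exp2l.
  have ql_ge : (q <= q ^ l)%N by rewrite -{1}(expn1 q) leq_exp2l.
  have ql2 : (q ^ l * 2 <= q ^ l * q)%N by rewrite leq_mul2l q_gt1 orbT.
  by move: ql_mod; rewrite !modn_small; lia.
- have := minl m; rewrite m_gt0 m_lt_l {1}qm_split modnDl eqxx.
  by move/(_ isT).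
Qed.

Lemma sp_distance_optimal_bch m : (2 <= m)%N ->
  sp_distance_optimal 5 ((5 ^ m - 1) %/ 2) ((5 ^ m - 1) %/ 2 - 2 * m) 4.
Proof.
move=> m_ge2; rewrite /sp_distance_optimal /sp_excludes /=.
have := mul2n_half_pow_pred m (isT : odd 5); set n := (_ %/ 2)%N => n_def.
have pow5_ge : (4 * m + 1 <= 5 ^ m)%N by elim: (m) => // k IH; rewrite expnS; lia.
have pow5_25 : (5 ^ 2 <= 5 ^ m)%N by rewrite leq_exp2l.
have n_ge2m : (2 * m <= n)%N by have := expn_gt0 5 m; lia.
rewrite -{1}(subnK n_ge2m) expnD ltn_pmul2l ?expn_gt0 //.
rewrite (_ : (5 - 1) %/ 2 = 2)%N // !big_nat_recr //= big_geq //.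
rewrite add0n bin0 bin1 expn0 expn1 mulnC expnM.
have := mul_bin_left n 1; rewrite bin1; nia.
Qed.

Section CharacteristicFive.
Variables (F : fieldType) (hchar : 5%N \in [pchar F]).

Lemma natr_mod5 k : ((k %% 5)%N%:R : F) = k%:R.
Proof.
by rewrite [in RHS](divn_eq k 5) natrD natrM (pcharf0 hchar) mulr0 add0r.
Qed.

Lemma toF_is_zmod_morphism : zmod_morphism (@toF F).
Proof.
move=> a b; rewrite /toF /= natr_mod5 natrD natr_mod5 natrB; last exact/ltnW/ltn_ord.
by rewrite (pcharf0 hchar) sub0r.
Qed.

Lemma toF_is_monoid_morphism : monoid_morphism (@toF F).
Proof. by split=> // a b; rewrite /toF /= natr_mod5 natrM. Qed.

#[local] HB.instance Definition _ :=
  GRing.isZmodMorphism.Build 'F_5 F (@toF F) toF_is_zmod_morphism.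
#[local] HB.instance Definition _ :=
  GRing.isMonoidMorphism.Build 'F_5 F (@toF F) toF_is_monoid_morphism.

Local Notation mp := (map_poly (toF F)).

Lemma root_map_dvdp p r x : p %| r -> root (mp p) x -> root (mp r) x.
Proof. by rewrite -(dvdp_map (toF F)); apply: root_dvdp. Qed.

Lemma minpoly5_dvdp b p r : is_minpoly5 b p -> root (mp r) b -> p %| r.
Proof.
case=> /monic_neq0 p0 [rp minp] rr; apply/negPn/negP => nmod.
have : root (mp (r %% p)) b.
  move: rr; rewrite {1}(divp_eq r p) rmorphD rmorphM /root hornerD hornerM.
  by rewrite (eqP rp) mulr0 add0r.
by move/(minp _ nmod); rewrite leqNgt ltn_modp p0.
Qed.

Lemma minpoly5_dvdpE b p r : is_minpoly5 b p -> (p %| r) = root (mp r) b.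
Proof.
move=> p_min; apply/idP/idP; last exact: minpoly5_dvdp.
by move/root_map_dvdp; apply; case: p_min => _ [].
Qed.

Lemma root_map_frobenius r x : root (mp r) x -> root (mp r) (x ^+ 5).
Proof.
move=> rx; have frob_mp : map_poly (pFrobenius_aut hchar) (mp r) = mp r.
  rewrite -map_poly_comp; apply: eq_map_poly => a /=.
  by rewrite pFrobenius_autE -rmorphXn -{2}(expf_card a) card_Fp.
by rewrite /root -frob_mp -(pFrobenius_autE hchar x) horner_map fmorph_eq0.
Qed.

Lemma root_map_frobeniusX r x i : root (mp r) x -> root (mp r) (x ^+ (5 ^ i)).
Proof.
move=> rx; elim: i => [|i IH]; first by rewrite expr1.
by rewrite expnSr exprM root_map_frobenius.
Qed.

Lemma horner_map_rVpoly n (c : 'rV['F_5]_n) x :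
  (mp (rVpoly c)).[x] = \sum_(i < n) toF F (c 0 i) * x ^+ i.
Proof.
rewrite -wpoly_rVpoly /wpoly rmorph_sum horner_sum; apply: eq_bigr => i _.
by rewrite /= map_polyZ map_polyXn hornerZ hornerXn.
Qed.

End CharacteristicFive.

Section FiniteFieldOfOrder5m.
Variables (F : finFieldType) (hchar : 5%N \in [pchar F]) (m : nat).
Hypothesis hcard : #|F| = (5 ^ m)%N.

(* The instances of [CharacteristicFive] depend on [hchar], so they are local. *)
#[local] HB.instance Definition _ :=
  GRing.isZmodMorphism.Build 'F_5 F (@toF F) (toF_is_zmod_morphism hchar).
#[local] HB.instance Definition _ :=
  GRing.isMonoidMorphism.Build 'F_5 F (@toF F) (toF_is_monoid_morphism hchar).

Local Notation mp := (map_poly (toF F)).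

(* [1, b, ..., b^m] are m+1 vectors of the m-dimensional GF(5)-space F. *)
Lemma size_minpoly5_le (b : F) p : is_minpoly5 b p -> (size p <= m.+1)%N.
Proof.
case=> _ [_ minp]; rewrite leqNgt; apply/negP => size_gt.
pose R := pPrimeCharType hchar.
pose X := [tuple (b : R) ^+ i | i < m.+1].
have freeX : free X.
  apply/freeP => k sum0 i.
  pose Q := \poly_(j < m.+1) k (inord j).
  have [Q0|Qn0] := eqVneq Q 0.
    have := congr1 (fun q : {poly _} => q`_i) Q0.
    by rewrite coef_poly ltn_ord coef0 inord_val.
  suff /(minp _ Qn0) : root (mp Q) b by rewrite leqNgt (leq_ltn_trans (size_poly _ _)).
  rewrite /root (@horner_coef_wide _ m.+1) ?size_map_poly ?size_poly //.
  apply/eqP; rewrite -[RHS]sum0; apply: eq_bigr => j _.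
  by rewrite coef_map coef_poly ltn_ord inord_val -tnth_nth tnth_mktuple.
have : (\dim <<X>> <= \dim {: R : vectType 'F_5})%N by rewrite dimvS ?subvf.
by rewrite pprimeChar_dimf hcard pfactorK // (eqP freeX) size_tuple ltnn.
Qed.

Section PrimitiveRoot.
Hypothesis m_ge2 : (2 <= m)%N.
Variables (beta : F) (beta_prim : (5 ^ m - 1).-primitive_root beta).

Local Notation n := ((5 ^ m - 1) %/ 2)%N.

Let n_double : (2 * n)%N = (5 ^ m - 1)%N.
Proof. exact: mul2n_half_pow_pred. Qed.

Let n_gt2 : (2 < n)%N.
Proof.
have : (5 ^ 2 <= 5 ^ m)%N by rewrite leq_exp2l.
by have := n_double; lia.
Qed.

Lemma expr_beta_inj i j : (i < 5 ^ m - 1)%N -> (j < 5 ^ m - 1)%N ->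
  beta ^+ i = beta ^+ j -> i = j.
Proof.
by move=> i_lt j_lt /eqP; rewrite (eq_prim_root_expr beta_prim) !modn_small // => /eqP.
Qed.

Lemma beta_neq0 : beta != 0.
Proof. by rewrite (prim_root_eq0 beta_prim) -n_double; lia. Qed.

Lemma beta_half : beta ^+ n = -1.
Proof.
have : (beta ^+ n) ^+ 2 == 1 by rewrite -exprM mulnC n_double prim_expr_order.
rewrite sqrf_eq1 => /orP [/eqP beta_n1|/eqP //].
by have := prim_order_dvd beta_prim n; rewrite beta_n1 eqxx -n_double => /dvdn_leq; lia.
Qed.

Lemma root_Xn1_beta_odd k : odd k -> root (mp ('X^n + 1)) (beta ^+ k).
Proof.
move=> k_odd; rewrite /root rmorphD rmorph1 /= map_polyXn hornerD hornerXn hornerC.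
by rewrite exprAC beta_half -signr_odd k_odd addNr.
Qed.

(* The cyclotomic cosets of 1 and 3 modulo 5^m - 1 are disjoint, of size m. *)
Lemma size_root_beta13_ge p : p != 0 ->
  root (mp p) beta -> root (mp p) (beta ^+ 3) -> ((2 * m).+1 <= size p)%N.
Proof.
move=> p_neq0 r1 r3.
pose es := [seq (5 ^ i)%N | i <- iota 0 m] ++ [seq (3 * 5 ^ i)%N | i <- iota 0 m].
have es_lt : {in es, forall e, e < 5 ^ m - 1}%N.
  move=> e; rewrite mem_cat => /orP [] /mapP [i]; rewrite mem_iota add0n => /andP [_ i_lt] ->;
    have := leq_pexp2l (isT : 0 < 5)%N i_lt; rewrite expnS; have := expn_gt0 5 i; lia.
have es_uniq : uniq es.
  rewrite cat_uniq !map_inj_uniq ?iota_uniq ?andbT //=.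
  - apply/hasPn => _ /mapP [i _ ->]; apply/negP => /mapP [j _ /(congr1 (dvdn 3))].
    by rewrite dvdn_mulr // Euclid_dvdX.
  - by move=> i j /eqP; rewrite eqn_pmul2l // eqn_exp2l // => /eqP.
  - by move=> i j /eqP; rewrite eqn_exp2l // => /eqP.
have := @max_poly_roots _ (mp p) [seq beta ^+ e | e <- es].
rewrite map_poly_eq0 p_neq0 size_map_poly size_map size_cat !size_map size_iota.
rewrite mul2n -addnn; apply=> //.
  apply/allP => x /mapP [e]; rewrite mem_cat => /orP [] /mapP [i _ ->] ->.
    exact: root_map_frobeniusX hchar _ _ _ r1.
  by rewrite exprM; apply: root_map_frobeniusX hchar _ _ _ r3.
rewrite map_inj_in_uniq // => i j /es_lt i_lt /es_lt j_lt; exact: expr_beta_inj.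
Qed.

Lemma wt_ge4 (c : 'rV['F_5]_n) : c != 0 ->
  root (mp (rVpoly c)) beta -> root (mp (rVpoly c)) (beta ^+ 3) -> (4 <= wt c)%N.
Proof.
move=> c_neq0 r1 r3; have r5 := root_map_frobenius hchar r1.
rewrite leqNgt; apply: contra c_neq0 => wt_lt4.
pose w i := toF F (c 0 i) * beta ^+ i.
have w_eq0 i : (w i == 0) = (c 0 i == 0).
  by rewrite mulf_eq0 fmorph_eq0 expf_eq0 (negPf beta_neq0) andbF orbF.
have z_inj : injective (fun i : 'I_n => beta ^+ (2 * i)).
  have lt_N (k : 'I_n) : (2 * k < 5 ^ m - 1)%N.
    by rewrite -[X in (_ < X)%N]n_double ltn_pmul2l.
  move=> i j /(expr_beta_inj (lt_N i) (lt_N j)) /eqP.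
  by rewrite eqn_pmul2l // => /eqP /val_inj.
have moments k : (k < 3)%N -> \sum_i w i * (beta ^+ (2 * i)) ^+ k = 0.
  move=> k_lt3; have : root (mp (rVpoly c)) (beta ^+ (2 * k).+1).
    by case: k k_lt3 => [|[|[|]]].
  rewrite /root (horner_map_rVpoly hchar) => /eqP sum0; rewrite -[RHS]sum0.
  apply: eq_bigr => i _.
  by rewrite /w -mulrA -!exprM -exprD; congr (_ * beta ^+ _); lia.
have := vanishing_moments_eq0 (in2W z_inj) moments.
under eq_finset => i do rewrite w_eq0.
move/(_ wt_lt4) => w0; apply/eqP/rowP => i; apply/eqP.
by rewrite mxE -w_eq0 w0.
Qed.

Lemma sign_beta_exp x : x != 0 -> exists (b : bool) (p : 'I_n), x = (-1) ^+ b * beta ^+ p.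
Proof.
move=> x_neq0; have : x ^+ (5 ^ m - 1) = 1.
  apply: (mulIf x_neq0); rewrite mul1r -exprSr subn1 prednK ?expn_gt0 //.
  by rewrite -hcard expf_card.
case/(prim_rootP beta_prim) => i ->.
have [i_lt|i_ge] := ltnP i n; first by exists false, (Ordinal i_lt); rewrite mul1r.
have i_n_lt : (i - n < n)%N.
  by have := ltn_ord i; rewrite -[X in (_ < X)%N -> _]n_double; lia.
by exists true, (Ordinal i_n_lt); rewrite /= expr1 -beta_half -exprD subnKC.
Qed.

Lemma weight4_witness : exists2 c : 'rV['F_5]_n, c != 0 &
  [/\ root (mp (rVpoly c)) beta, root (mp (rVpoly c)) (beta ^+ 3) & (wt c <= 4)%N].
Proof.
have beta4_neq1 : beta ^+ 4 != 1.
  by rewrite -(prim_order_dvd beta_prim); apply/negP => /dvdn_leq; rewrite -n_double; lia.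
have shift_neq0 (s : F) : s ^+ 2 = 1 -> (beta + s) ^+ 2 != 0.
  move=> s2; rewrite expf_eq0 /= addr_eq0; apply: contra beta4_neq1 => /eqP ->.
  by rewrite (exprM _ 2 2) sqrrN s2 expr1n.
have [b3 [p3 e3]] := sign_beta_exp (shift_neq0 (-1) (sqrr_sign _ 1)).
have [b4 [p4 e4]] := sign_beta_exp (shift_neq0 1 (expr1n _ 2)).
pose p : {poly 'F_5} := 1 + 'X^2 + (2 * (-1) ^+ b3) *: 'X^p3 + (2 * (-1) ^+ b4) *: 'X^p4.
have size_p : (size p <= n)%N.
  apply/leq_sizeP => j n_le_j.
  have j_neq k : (k < n)%N -> (j == k) = false by move=> k_lt; apply/negbTE; lia.
  by rewrite !coefE !j_neq ?ltn_ord ?(leq_trans _ n_gt2) // !mulr0n !mulr0 !addr0.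
have p_neq0 : p != 0.
  apply/negP => /eqP/(congr1 (horner^~ 1)); rewrite !hornerE !expr1n !mulr1.
  by case: (b3); case: (b4) => /eqP.
have mp_p (x : F) :
    (mp p).[x] = 1 + x ^+ 2 + 2 * ((-1) ^+ b3 * x ^+ p3) + 2 * ((-1) ^+ b4 * x ^+ p4).
  rewrite !rmorphD rmorph1 /= !map_polyZ !map_polyXn !hornerE.
  by rewrite !(rmorphM (toF F)) !(rmorph_nat (toF F)) !(rmorphXn (toF F)) !rmorphN1.
have five0 : 5%:R = 0 :> F := pcharf0 hchar.
exists (poly_rV p).
  by apply: contra p_neq0 => /eqP p0; rewrite -(poly_rV_K size_p) p0 linear0.
rewrite poly_rV_K //; split.
- rewrite /root mp_p -e3 -e4; apply/eqP.
  by transitivity (5%:R * (1 + beta ^+ 2)); [ring | rewrite five0 mul0r].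
- have sign_cube (b : bool) (y : F) : (-1) ^+ b * y ^+ 3 = ((-1) ^+ b * y) ^+ 3.
    by rewrite exprMn [in RHS]exprS sqrr_sign mulr1.
  rewrite /root mp_p !(exprAC beta 3) !sign_cube -e3 -e4; apply/eqP.
  transitivity (5%:R * (beta ^+ 6 + 12%:R * beta ^+ 4 + 12%:R * beta ^+ 2 + 1)).
    by ring.
  by rewrite five0 mul0r.
- pose i0 := Ordinal (ltn_trans (isT : 0 < 2)%N n_gt2); pose i2 := Ordinal n_gt2.
  apply: leq_trans (card_size [:: i0; i2; p3; p4]); apply/subset_leq_card/subsetP => i.
  rewrite !inE mxE !coefE; apply: contraR; rewrite !negb_or => /and4P [ne0 ne2 ne3 ne4].
  rewrite -!val_eqE /= in ne0 ne2 ne3 ne4.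
  by rewrite (negPf ne0) (negPf ne2) (negPf ne3) (negPf ne4) !mulr0 !addr0.
Qed.

Section BCHCode.
Variables (M1 M3 M5 g : {poly 'F_5}).
Hypotheses (M1_min : is_minpoly5 beta M1) (M3_min : is_minpoly5 (beta ^+ 3) M3).
Hypotheses (M5_min : is_minpoly5 (beta ^+ 5) M5) (g_lcm : is_lcm3 M1 M3 M5 g).

Let g_neq0 : g != 0.
Proof. by case: g_lcm => /monic_neq0. Qed.

Lemma dvdp_bch_generator p :
  (g %| p) = root (mp p) beta && root (mp p) (beta ^+ 3).
Proof.
rewrite (dvdp_lcm3 p g_lcm) (minpoly5_dvdpE hchar _ M1_min).
rewrite (minpoly5_dvdpE hchar _ M3_min) (minpoly5_dvdpE hchar _ M5_min).
by rewrite andbA andb_idr // => /andP [/(root_map_frobenius hchar)].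
Qed.

Lemma bch_generatorE : g = M1 * M3 /\ size g = (2 * m).+1.
Proof.
have [M1_monic [r1 _]] := M1_min; have [M3_monic [r3 _]] := M3_min.
have M13_monic : M1 * M3 \is monic by rewrite monicMl.
have g_M13 : g %| M1 * M3.
  rewrite dvdp_bch_generator (root_map_dvdp hchar (dvdp_mulIl M1 M3) r1).
  by rewrite (root_map_dvdp hchar (dvdp_mulIr M1 M3) r3).
have /andP [rg1 rg3] : root (mp g) beta && root (mp g) (beta ^+ 3).
  by rewrite -dvdp_bch_generator.
have size_g_ge := size_root_beta13_ge g_neq0 rg1 rg3.
have size_M13 : (size (M1 * M3)%R <= (2 * m).+1)%N.
  rewrite size_mul ?monic_neq0 // -subn1 leq_subLR.
  apply: leq_trans (leq_add (size_minpoly5_le M1_min) (size_minpoly5_le M3_min)) _.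
  by rewrite addSn add1n mul2n -addnn addnS.
have : g %= M1 * M3.
  rewrite -dvdp_size_eqp // eqn_leq (dvdp_leq (monic_neq0 M13_monic) g_M13).
  exact: leq_trans size_M13 size_g_ge.
rewrite eqp_monic //; last by case: g_lcm.
move/eqP => g_eq; split => //; apply/eqP.
by rewrite eqn_leq size_g_ge andbT g_eq size_M13.
Qed.

Lemma bch_generator_dvd_Xn1 : g %| 'X^n + 1.
Proof. by rewrite dvdp_bch_generator -{1}[beta]expr1 !root_Xn1_beta_odd. Qed.

Lemma mem_bch_code c : (c \in negacyclic_code n g) =
  root (mp (rVpoly c)) beta && root (mp (rVpoly c)) (beta ^+ 3).
Proof.
by rewrite mem_negacyclic_code ?bch_generator_dvd_Xn1 ?dvdp_bch_generator //; lia.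
Qed.

Lemma dim_bch_code : code_dim (negacyclic_code n g) = (n - 2 * m)%N.
Proof.
rewrite dim_negacyclic_code ?bch_generator_dvd_Xn1 //; last by lia.
by case: bch_generatorE => _ ->.
Qed.

Lemma min_dist_bch_code : min_dist (negacyclic_code n g) 4.
Proof.
have wt_ge c : c \in negacyclic_code n g -> c != 0 -> (4 <= wt c)%N.
  by rewrite mem_bch_code => /andP [r1 r3] c_neq0; apply: wt_ge4.
split=> //; have [c c_neq0 [r1 r3 wt_le4]] := weight4_witness.
have c_in : c \in negacyclic_code n g by rewrite mem_bch_code r1 r3.
by exists c; rewrite // c_neq0 eqn_leq wt_le4 wt_ge.
Qed.

End BCHCode.

End PrimitiveRoot.

End FiniteFieldOfOrder5m.

Theorem theorem41 (m : nat) (hm : (2 <= m)%N)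
  (l : nat) (hl : ord_mod 5 (2 * ((5 ^ m - 1) %/ 2)) l)
  (F : finFieldType) (hchar : 5%N \in [pchar F]) (hcard : #|F| = (5 ^ l)%N)
  (alpha : F) (halpha : (#|F|.-1).-primitive_root alpha)
  (M1 M3 M5 g : {poly 'F_5}) :
  let n := ((5 ^ m - 1) %/ 2)%N in
  let beta := alpha ^+ ((5 ^ l - 1) %/ (2 * n)) in
  is_minpoly5 beta M1 -> is_minpoly5 (beta ^+ 3) M3 -> is_minpoly5 (beta ^+ 5) M5 ->
  is_lcm3 M1 M3 M5 g ->
  let C := negacyclic_code n g in
  g = M1 * M3 /\
  code_dim C = (n - 2 * m)%N /\ min_dist C 4 /\
  sp_distance_optimal 5 n (n - 2 * m) 4.
Proof.
have n_double := mul2n_half_pow_pred m (isT : odd 5).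
have pow5_gt1 : (1 < 5 ^ m - 1)%N.
  by have := leq_pexp2l (isT : 0 < 5)%N hm; lia.
rewrite n_double in hl; have l_eq_m := ord_mod_pow_pred (isT : 1 < 5)%N (ltnW hm) hl.
subst l.
rewrite /= n_double divnn (ltnW pow5_gt1) expr1 => M1_min M3_min M5_min g_lcm /=.
have alpha_prim : (5 ^ m - 1).-primitive_root alpha by rewrite -hcard subn1.
have [g_eq _] := bch_generatorE hchar hcard hm alpha_prim M1_min M3_min M5_min g_lcm.
have dimC := dim_bch_code hchar hcard hm alpha_prim M1_min M3_min M5_min g_lcm.
have distC := min_dist_bch_code hchar hcard hm alpha_prim M1_min M3_min M5_min g_lcm.
by do !split => //; apply: sp_distance_optimal_bch.
Qed.
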